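(* Let $N\ge 1$ and let $\mathbf{g}\in\mathbb{C}^N$ be a window such that, for every $\ell=0,1,\dots,N-1$, the DFT of the length-$N$ sequence $m\mapsto \mathbf{g}[m]\,\overline{\mathbf{g}[(m-\ell)\bmod N]}$ is non-vanishing (all its entries are nonzero). Then for every $\mathbf{x}\in\mathbb{C}^N$, the LS Algorithm described in the context, applied to the noise-free STFT magnitude $\mathbf{Y}[m,k]=|\mathbf{X}[m,k]|^2$ of $\mathbf{x}$ (with $L=1$), outputs $\hat{\mathbf{x}}=e^{i\phi}\mathbf{x}$ for some $\phi\in\mathbb{R}$, i.e. it recovers $\mathbf{x}$ up to global phase.
   Context: Signals and windows are indexed by $\{0,\dots,N-1\}$ and extended $N$-periodically. The STFT of $\mathbf{x}\in\mathbb{C}^N$ with window $\mathbf{g}$ and step $L=1$ is $\mathbf{X}[m,k]=\sum_{n=0}^{N-1}\mathbf{x}[n]\mathbf{g}[m-n]e^{-2\pi i kn/N}$ for $m,k=0,\dots,N-1$. The DFT of $\mathbf{v}\in\mathbb{C}^N$ is $(\mathbf{F}\mathbf{v})[k]=\sum_n \mathbf{v}[n]e^{-2\pi i kn/N}$; $\mathbf{F}^*$ denotes its conjugate transpose. For a matrix $\mathbf{M}\in\mathbb{C}^{N\times N}$ and $\ell\in\{0,\dots,N-1\}$, $\mathrm{diag}(\mathbf{M},\ell)\in\mathbb{C}^N$ is the vector of entries $\mathbf{M}_{i,(i+\ell)\bmod N}$, $i=0,\dots,N-1$. LS Algorithm: given $\mathbf{Y}[m,k]$, (1) compute $\mathbf{Z}[m,\ell]=\sum_{k=0}^{N-1}\mathbf{Y}[m,k]e^{-2\pi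 i k\ell/N}$ and set $\mathbf{z}_\ell=(\mathbf{Z}[m,\ell])_{m=0}^{N-1}$; (2) for each $\ell=0,\dots,N-1$ compute $\mathbf{x}_\ell=\frac1N\mathbf{F}^*\mathbf{\Sigma}_\ell^{-1}\mathbf{F}\mathbf{z}_\ell$, where $\mathbf{\Sigma}_\ell$ is the diagonal matrix whose diagonal is $\mathbf{F}\big(\mathbf{g}[n]\overline{\mathbf{g}[(n-\ell)\bmod N]}\big)_{n=0}^{N-1}$ (with the normalization of $\mathbf{F}$ chosen so that $\mathbf{F}^*\mathbf{\Sigma}_\ell\mathbf{F}$ is the circulant matrix $\mathbf{G}_\ell$ with first column $(\mathbf{g}[m]\overline{\mathbf{g}[(m-\ell)\bmod N]})_m$, i.e. $\mathbf{x}_\ell=\frac1N\mathbf{G}_\ell^{-1}\mathbf{z}_\ell$); (3) form $\mathbf{X}\in\mathbb{C}^{N\times N}$ with $\mathrm{diag}(\mathbf{X},\ell)=\mathbf{x}_\ell$ for all $\ell$; (4) output $\hat{\mathbf{x}}=\sqrt{\lambda_{\max}}\,u_{\max}$, where $\lambda_{\max}$ is the largest eigenvalue of $\mathbf{X}$ and $u_{\max}$ an associated unit eigenvector. *)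

From HB Require Import structures.
From mathcomp Require Import all_boot all_order all_algebra.
From mathcomp Require Import complex.
From mathcomp Require Import reals trigo.
Set Implicit Arguments.
Unset Strict Implicit.
Unset Printing Implicit Defensive.
Import Order.TTheory GRing.Theory Num.Theory.
Local Open Scope ring_scope.
Local Open Scope complex_scope.

Section LS.
Variable R : realType.
(* Signals live in C^N with N = n.+1 >= 1, indexed by 'I_N = {0,...,N-1};
   'I_N carries the additive group Z/NZ, so (m - l) below is (m - l) mod N. *)
Variable n : nat.
Local Notation N := n.+1.
Local Notation C := (R[i]).
Local Notation vec := 'cV[C]_N.

Definition cexpN (a : nat) : C :=
  (cos (2 * pi * a%:R / N%:R)) -i* (sin (2 * pi * a%:R / N%:R)).

Definition cexpi (phi : R) : C := (cos phi) +i* (sin phi).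

Definition dft (v : 'I_N -> C) (k : 'I_N) : C :=
  \sum_(m < N) v m * cexpN (k * m).

Definition gprod (g : vec) (l : 'I_N) (m : 'I_N) : C :=
  g m 0 * (g (m - l) 0)^*.

(* STFT with step L = 1: X[m,k] = sum_n x[n] g[m-n] e^{-2 pi i k n / N} *)
Definition stft (g x : vec) : 'M[C]_N :=
  \matrix_(m < N, k < N) \sum_(j < N) x j 0 * g (m - j) 0 * cexpN (k * j).

Definition stft_mag (g x : vec) : 'M[C]_N :=
  \matrix_(m < N, k < N) `|stft g x m k| ^+ 2.

(* LS Algorithm, step (1): Z[m,l] = sum_k Y[m,k] e^{-2 pi i k l / N};
   z_l is the l-th column of Z *)
Definition ls_Z (Y : 'M[C]_N) : 'M[C]_N :=
  \matrix_(m < N, l < N) \sum_(k < N) Y m k * cexpN (k * l).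

Definition circG (g : vec) (l : 'I_N) : 'M[C]_N :=
  \matrix_(i < N, j < N) gprod g l (i - j).

Definition ls_xl (g : vec) (Y : 'M[C]_N) (l : 'I_N) : vec :=
  (N%:R)^-1 *: (invmx (circG g l) *m col l (ls_Z Y)).

(* step (3): the matrix with diag(X, l) = x_l, i.e. X[i, (i+l) mod N] = x_l[i] *)
Definition ls_X (g : vec) (Y : 'M[C]_N) : 'M[C]_N :=
  \matrix_(i < N, j < N) ls_xl g Y (j - i) i 0.

Definition is_eigenvalue (A : 'M[C]_N) (mu : C) : Prop :=
  exists v : vec, v != 0 /\ A *m v = mu *: v.

Definition unit_vec (u : vec) : Prop := \sum_(i < N) `|u i 0| ^+ 2 = 1.

End LS.

From HB Require Import structures.
From mathcomp Require Import all_boot all_order all_algebra.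
From mathcomp Require Import complex.
From mathcomp Require Import reals trigo.
From mathcomp Require Import ring lra zify.
Set Implicit Arguments.
Unset Strict Implicit.
Unset Printing Implicit Defensive.
Import Order.TTheory GRing.Theory Num.Theory.
Local Open Scope ring_scope.
Local Open Scope complex_scope.

(* Summing |X[m,k]|^2 against e^{-2 pi i k l / N} over k gives, for each lag
   l, N times the circular convolution of g[.] conj(g[. - l]) with the lag
   product a |-> x[a] conj(x[a + l]).  That convolution is the circulant
   matrix G_l, which the DFT diagonalizes with the DFT of the window product
   as eigenvalues, so G_l is invertible and step (2) returns the lag products
   exactly.  Step (3) then assembles the rank-one matrix x x^*, whose only
   nonzero eigenvalue is ||x||^2, with eigenvector x; a unit eigenvector for
   it, scaled by ||x||, is x times a unimodular number e^{i phi}. *)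

Section RootsOfUnity.
Variables (R : realType) (n : nat).
Local Notation N := n.+1.
Local Notation e := (cexpN R n).

Lemma cexpND a b : e (a + b) = e a * e b.
Proof.
rewrite /cexpN natrD mulrDr mulrDl cosD sinD; simpc.
by congr (_ +i* _); ring.
Qed.

Lemma cexpN0 : e 0 = 1.
Proof. by rewrite /cexpN !mulr0 mul0r cos0 sin0 oppr0. Qed.

Lemma cexpNX a : e a = e 1 ^+ a.
Proof.
by elim: a => [|a IH]; rewrite ?cexpN0 // -addn1 cexpND IH exprD expr1.
Qed.

Lemma cexpNM a b : e (a * b) = e b ^+ a.
Proof. by rewrite cexpNX [e b]cexpNX -exprM mulnC. Qed.

Lemma cexpNN : e N = 1.
Proof.
rewrite /cexpN mulrK ?unitfE ?pnatr_eq0 //.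
by rewrite mulr_natl cos2pi sin2pi oppr0.
Qed.

Lemma cexpN_modn a : e (a %% N) = e a.
Proof. by rewrite [in RHS](divn_eq a N) cexpND cexpNM cexpNN expr1n mul1r. Qed.

Lemma cexpN_root a : e a ^+ N = 1.
Proof. by rewrite -cexpNM -cexpN_modn modnMr cexpN0. Qed.

(* [n] is [-1] modulo [N]. *)
Lemma cexpN_nmulK a : e (n * a) * e a = 1.
Proof. by rewrite -cexpND -mulSnr cexpNM cexpN_root. Qed.

Lemma conj_cexpN a : (e a)^*%R = e (n * a).
Proof.
have norm1 : e a * (e a)^*%R = 1.
  rewrite /cexpN; simpc; set t := (2 * pi * _ / _).
  by rewrite -!expr2 cos2Dsin2 (mulrC (cos t)) subrr.
by rewrite -[LHS]mul1r -(cexpN_nmulK a) -mulrA norm1 mulr1.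
Qed.

Lemma cexpN_neq1 r : (0 < r < N)%N -> e r != 1.
Proof.
case/andP=> r_gt0 r_ltN; apply/negP => /eqP[+ _].
pose y : R := pi * r%:R / N%:R.
have -> : 2 * pi * r%:R / N%:R = y *+ 2 by rewrite /y mulr2n; ring.
have y_in : 0 < y < pi.
  have N_gt0 : 0 < N%:R :> R by rewrite ltr0n.
  rewrite divr_gt0 ?mulr_gt0 ?pi_gt0 ?ltr0n //=.
  by rewrite ltr_pdivrMr // ltr_pM2l ?pi_gt0 // ltr_nat.
have : 0 < sin y ^+ 2 by rewrite exprn_gt0 // sin_gt0_pi.
rewrite cos_mulr2n cos2sin2; move: (sin y ^+ 2) => s s_gt0.
by rewrite mulr2n; lra.
Qed.

Lemma cexpN_eq1 a : (e a == 1) = (N %| a)%N.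
Proof.
rewrite -cexpN_modn /dvdn; have [->|a_ndvd] := eqVneq (a %% N)%N 0%N.
  by rewrite cexpN0 eqxx.
by rewrite (negbTE (@cexpN_neq1 (a %% N) _)) // lt0n a_ndvd ltn_mod.
Qed.

Lemma sum_cexpNM d : \sum_(k < N) e (k * d) = if (N %| d)%N then N%:R else 0.
Proof.
under eq_bigr do rewrite cexpNM.
rewrite -cexpN_eq1; have [->|d_neq1] := eqVneq (e d) 1.
  by under eq_bigr do rewrite expr1n; rewrite sumr_const card_ord.
have : (e d - 1) * \sum_(k < N) e d ^+ k = 0.
  by rewrite -subrX1 cexpN_root subrr.
by move/eqP; rewrite mulf_eq0 subr_eq0 (negbTE d_neq1) => /eqP.
Qed.

Lemma cexpN_mulD k (a b : 'I_N) : e (k * (a + b)%R) = e (k * a) * e (k * b).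
Proof.
have -> : nat_of_ord (a + b)%R = ((a + b) %% N)%N by [].
by rewrite !cexpNM cexpN_modn cexpND exprMn.
Qed.

Lemma cexpN_nmulB k (a b : 'I_N) :
  e (n * (k * (a - b)%R)) = e (n * (k * a)) * e (k * b).
Proof.
have -> : e (n * (k * a)) = e (n * (k * (a - b)%R)) * e (n * (k * b)).
  by rewrite !mulnA -cexpN_mulD subrK.
by rewrite -mulrA cexpN_nmulK mulr1.
Qed.

Lemma dvdn_nmulD (j j' : 'I_N) : (N %| n * j + j')%N = (j == j').
Proof.
apply/idP/eqP => [N_dvd|->]; last by rewrite -mulSnr dvdn_mulr.
have : ((n * j + j' + j) %% N = j)%N.
  by rewrite -modnDml (eqP N_dvd) add0n modn_small.
have -> : (n * j + j' + j = j * N + j')%N by rewrite mulnS (mulnC j n); lia.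
by rewrite modnMDl modn_small // => j'_j; apply/val_inj.
Qed.

Lemma dvdn_lag (a b l : 'I_N) : (N %| a + n * b + l)%N = (b == a + l)%R.
Proof.
rewrite -dvdn_nmulD.
have -> : nat_of_ord (a + l)%R = ((a + l) %% N)%N by [].
by rewrite addnAC addnC /dvdn modnDmr.
Qed.

Lemma sum_cexpN_lag (t : R[i]) (a b l : 'I_N) :
  \sum_(k < N) t * e (k * (a + n * b)) * e (k * l)
  = t * if b == (a + l)%R then N%:R else 0.
Proof.
rewrite -dvdn_lag -sum_cexpNM big_distrr /=.
by apply: eq_bigr => k _; rewrite -mulrA -cexpND -mulnDr.
Qed.

End RootsOfUnity.

Section Circulant.
Variables (R : realType) (n : nat).
Local Notation N := n.+1.
Local Notation C := R[i].
Local Notation e := (cexpN R n).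

Definition circulant (c : 'I_N -> C) : 'M[C]_N := \matrix_(i, j) c (i - j).

Definition dftmx : 'M[C]_N := \matrix_(k, j) e (k * j).

(* Since [n] is [-1] modulo [N], this is the conjugate of [dftmx]. *)
Definition idftmx : 'M[C]_N := \matrix_(j, k) e (n * (k * j)).

Lemma circulant_idftmx c :
  circulant c *m idftmx = idftmx *m diag_mx (\row_k dft c k).
Proof.
apply/matrixP => i k; rewrite mul_mx_diag !mxE /dft big_distrr /=.
rewrite (reindex_inj (subrI i)) /=; apply: eq_bigr => j _.
by rewrite !mxE subKr cexpN_nmulB mulrCA (mulnC k j).
Qed.

Lemma idftmxK : idftmx *m dftmx = (N%:R : C)%:M.
Proof.
apply/matrixP => j j'; rewrite !mxE.
under eq_bigr do rewrite !mxE -cexpND mulnCA -mulnDr.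
by rewrite sum_cexpNM dvdn_nmulD; case: (j == j').
Qed.

Lemma circulant_unitmx c : (forall k, dft c k != 0) -> circulant c \in unitmx.
Proof.
move=> dft_neq0; pose D := diag_mx (\row_k (dft c k)^-1).
have DK : diag_mx (\row_k dft c k) *m D = 1%:M.
  rewrite mulmx_diag -diag_const_mx; congr diag_mx.
  by apply/rowP => k; rewrite !mxE mulfV.
have : circulant c *m ((N%:R : C)^-1 *: (idftmx *m D *m dftmx)) = 1%:M.
  rewrite -scalemxAr !mulmxA circulant_idftmx -(mulmxA idftmx) DK mulmx1.
  by rewrite idftmxK scale_scalar_mx mulVf ?pnatr_eq0.
by case/mulmx1_unit.
Qed.

End Circulant.

Section RankOne.
Variables (C : numClosedFieldType) (m : nat).
Implicit Types (x u v : 'cV[C]_m) (a : C).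

Definition outer x : 'M[C]_m := \matrix_(i, j) (x i 0 * (x j 0)^*%R).

Definition dotc x v : C := \sum_j (x j 0)^*%R * v j 0.

Lemma mul_outer x v : outer x *m v = dotc x v *: x.
Proof.
apply/matrixP => i j; rewrite !mxE big_distrl /= (ord1 j).
by apply: eq_bigr => k _; rewrite mxE -mulrA mulrC.
Qed.

Lemma dotcZr x v a : dotc x (a *: v) = a * dotc x v.
Proof.
by rewrite /dotc big_distrr; apply: eq_bigr => i _; rewrite mxE mulrCA.
Qed.

Lemma dotcZl x v a : dotc (a *: x) v = a^*%R * dotc x v.
Proof.
by rewrite /dotc big_distrr; apply: eq_bigr => i _; rewrite mxE rmorphM -mulrA.
Qed.

Lemma dotc_normE x : dotc x x = \sum_i `|x i 0| ^+ 2.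
Proof. by apply: eq_bigr => i _; rewrite normCKC. Qed.

Lemma dotc_gt0 x : x != 0 -> 0 < dotc x x.
Proof.
move=> x_neq0; have sq_ge0 i : 0 <= `|x i 0| ^+ 2 by rewrite exprn_ge0.
rewrite dotc_normE lt_def sumr_ge0 ?andbT //.
apply: contra_neq x_neq0 => /eqP; rewrite psumr_eq0 // => /allP x0.
apply/matrixP => i j; rewrite (ord1 j) mxE.
by apply/eqP; move: (x0 i (mem_index_enum i)); rewrite sqrf_eq0 normr_eq0.
Qed.

(* [outer x] has the single nonzero eigenvalue [dotc x x], with eigenvector
   [x]. *)
Lemma outer_top_eigenvector x u lam :
  \sum_i `|u i 0| ^+ 2 = 1 -> outer x *m u = lam *: u ->
  (forall mu, (exists v, v != 0 /\ outer x *m v = mu *: v) -> mu <= lam) ->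
  exists2 z, `|z| = 1 & sqrtC lam *: u = z *: x.
Proof.
rewrite -dotc_normE mul_outer => u_unit u_eig lam_max.
have u_neq0 : u != 0.
  apply: contra_eq_neq u_unit => ->.
  by rewrite /dotc big1 1?eq_sym ?oner_neq0 // => i _; rewrite mxE mulr0.
have [x0|x_neq0] := eqVneq x 0.
  have : lam *: u = 0 by rewrite -u_eig x0 scaler0.
  move/eqP; rewrite scaler_eq0 (negbTE u_neq0) orbF => /eqP ->.
  by exists 1; rewrite ?normr1 // sqrtC0 scale0r x0 scaler0.
have x_gt0 : 0 < dotc x x by exact: dotc_gt0.
have lam_gt0 : 0 < lam.
  by apply/(lt_le_trans x_gt0)/lam_max; exists x; rewrite mul_outer.
pose c := dotc x u / lam.
have u_def : u = c *: x.
  by rewrite /c mulrC -scalerA u_eig scalerA mulVf ?gt_eqF // scale1r.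
have xu_neq0 : dotc x u != 0.
  by apply: contra_neq u_neq0 => xu0; rewrite u_def /c xu0 mul0r scale0r.
have lam_def : lam = dotc x x.
  have : c * (dotc x x - lam) = 0.
    by rewrite mulrBr -dotcZr -u_def divfK ?gt_eqF ?subrr.
  move/eqP; rewrite mulf_eq0 mulf_eq0 invr_eq0 (negbTE xu_neq0) gt_eqF //=.
  by rewrite subr_eq0 => /eqP.
exists (sqrtC lam * c); last by rewrite u_def scalerA.
apply/eqP; rewrite -sqrp_eq1 // normCK rmorphM /= mulrACA.
rewrite (conj_Creal (sqrtC_real (ltW lam_gt0))) -expr2 sqrtCK.
by rewrite lam_def -u_unit u_def dotcZr dotcZl; apply/eqP; ring.
Qed.

End RankOne.

Section NoiseFree.
Variables (R : realType) (n : nat) (g x : 'cV[R[i]]_n.+1).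
Local Notation N := n.+1.
Local Notation e := (cexpN R n).
Local Notation Y := (stft_mag g x).

Definition lagprod (l : 'I_N) : 'cV[R[i]]_N :=
  \col_a (x a 0 * (x (a + l) 0)^*%R).

Lemma stft_magE m k : Y m k =
  \sum_a \sum_b (x a 0 * g (m - a) 0 * ((x b 0)^*%R * (g (m - b) 0)^*%R))
                * e (k * (a + n * b)).
Proof.
rewrite !mxE normCK rmorph_sum mulr_suml; apply: eq_bigr => a _.
rewrite mulr_sumr; apply: eq_bigr => b _.
by rewrite !rmorphM /= conj_cexpN mulnDr mulnCA cexpND mulrACA.
Qed.

(* Summing over [k] kills every pair [(a, b)] except [b = a + l]. *)
Lemma ls_Z_col l : col l (ls_Z Y) = N%:R *: (circG g l *m lagprod l).
Proof.
apply/matrixP => m j; rewrite !mxE.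
under eq_bigr do rewrite stft_magE mulr_suml.
under eq_bigr do under eq_bigr do rewrite mulr_suml.
rewrite exchange_big mulr_sumr; apply: eq_bigr => a _ /=.
rewrite exchange_big /=.
under eq_bigr do rewrite sum_cexpN_lag.
rewrite (bigD1 (a + l)%R) //= eqxx big1 ?addr0 => [|b /negbTE ->]; last first.
  by rewrite mulr0.
by rewrite /circG /lagprod !mxE /gprod opprD addrA; ring.
Qed.

Lemma ls_xl_lagprod l : (forall k, dft (gprod g l) k != 0) ->
  ls_xl g Y l = lagprod l.
Proof.
move=> dft_neq0; rewrite /ls_xl ls_Z_col -scalemxAr.
rewrite (mulKmx (circulant_unitmx dft_neq0)) scalerA.
by rewrite mulVf ?pnatr_eq0 ?scale1r.
Qed.

Lemma ls_X_outer : (forall l k, dft (gprod g l) k != 0) -> ls_X g Y = outer x.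
Proof.
move=> dft_neq0; apply/matrixP => i j.
by rewrite mxE ls_xl_lagprod // !mxE addrC subrK.
Qed.

End NoiseFree.

Lemma cexpi_onto (R : realType) (z : R[i]) :
  `|z| = 1 -> exists phi, cexpi phi = z.
Proof.
move=> /eqP; rewrite -sqrp_eq1 // normCK.
case: z => a b; simpc => /eqP[ab1 _].
have a_in : -1 <= a <= 1 by apply/andP; split; nra.
have cos_acos : cos (acos a) = a by rewrite acosK // in_itv.
have sin_acos : sin (acos a) = `|b|.
  by rewrite sin_acos // -sqrtr_sqr; congr Num.sqrt; rewrite -ab1; ring.
have [b_ge0|b_lt0] := lerP 0 b.
  by exists (acos a); rewrite /cexpi cos_acos sin_acos ger0_norm.
exists (- acos a).
by rewrite /cexpi cosN sinN cos_acos sin_acos ltr0_norm ?opprK.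
Qed.

Theorem theorem1 (R : realType) (n : nat) (g : 'cV[R[i]]_(n.+1))
  (hg : forall (l k : 'I_(n.+1)), dft (gprod g l) k != 0)
  (x : 'cV[R[i]]_(n.+1)) (lam : R[i]) (u : 'cV[R[i]]_(n.+1))
  (hu : unit_vec u)
  (heig : ls_X g (stft_mag g x) *m u = lam *: u)
  (hmax : forall mu : R[i], is_eigenvalue (ls_X g (stft_mag g x)) mu -> mu <= lam) :
  exists phi : R, sqrtC lam *: u = cexpi phi *: x.
Proof.
rewrite ls_X_outer // in heig hmax.
have [z /cexpi_onto[phi <-] ->] := outer_top_eigenvector hu heig hmax.
by exists phi.
Qed.
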